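(* Let $f_1,f_2:\mathbb R^d\to\mathbb R$ be convex with $\nabla f_i$ globally Lipschitz continuous with modulus $L_i>0$ ($i=1,2$), let $f_3:\mathbb R^d\to\mathbb R\cup\{+\infty\}$ be proper and lower semicontinuous, and assume $\varphi:=f_1+f_2+f_3$ has a nonempty set of minimizers. Let $\alpha>0$ and $\gamma\in(0,\frac{1}{L_1+L_2})$. Then the relaxed Ryu envelope $\varphi_\gamma^{\mathrm{Ryu}}:\mathbb R^d\times\mathbb R^d\to\mathbb R\cup\{\pm\infty\}$ is real-valued and locally Lipschitz continuous.
   Context: For $h:\mathbb R^d\to\mathbb R\cup\{+\infty\}$ and $\gamma>0$, $\mathrm{prox}_{\gamma h}(z):=\operatorname{argmin}_{y}\{h(y)+\frac{1}{2\gamma}\|y-z\|^2\}$. Set $\gamma_1=\gamma/\alpha$, $\gamma_2=\gamma/(1-\alpha)$, with conventions $\frac{c}{0}=\infty$, $\frac{d}{\infty}=0$ ($c>0,d\in\mathbb R$). For $(z_1,z_2)\in\mathbb R^d\times\mathbb R^d$, let $x_1=\mathrm{prox}_{\gamma f_1}(z_1)$ and $x_2=\mathrm{prox}_{\frac{\gamma}{\alpha}f_2}(\frac{z_2}{\alpha}+x_1)$, and define the relaxed Ryu envelope $$\varphi_\gamma^{\mathrm{Ryu}}(z_1,z_2):=\min_{y\in\mathbb R^d}\Big\{f_3(y)+\sum_{i=1}^2\Big[f_i(x_i)+\langle y-x_i,\nabla f_i(x_i)\rangle+\frac{1}{2\gamma_i}\|y-x_i\|^2\Big]\Big\}.$$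 *)

From HB Require Import structures.
From mathcomp Require Import all_boot all_order all_algebra.
From mathcomp Require Import all_classical all_reals all_analysis.
Set Implicit Arguments. Unset Strict Implicit. Unset Printing Implicit Defensive.
Import Order.TTheory GRing.Theory Num.Theory.
Import numFieldNormedType.Exports.
Local Open Scope ring_scope.
Local Open Scope classical_set_scope.

Section Defs.
Variables (R : realType) (d : nat).
Local Notation V := 'rV[R]_d.

Definition inner (u v : V) : R := \sum_(i < d) u 0 i * v 0 i.
Definition enorm (u : V) : R := Num.sqrt (inner u u).

Definition enorm2 (u : V * V) : R := Num.sqrt (inner u.1 u.1 + inner u.2 u.2).

Definition is_gradient (f : V -> R) (g : V -> V) : Prop :=
  forall x, differentiable f x /\ forall h, ('d f x) h = inner h (g x).

Definition lipschitz_with (g : V -> V) (L : R) : Prop :=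
  forall x y, enorm (g x - g y) <= L * enorm (x - y).

Definition proper_fun (h : V -> \bar R) : Prop :=
  (forall x, h x != -oo%E) /\ (exists x, h x \is a fin_num).

Definition prox (gamma : R) (h : V -> R) (z : V) : V :=
  xget 0 [set y | forall w, h y + (2 * gamma)^-1 * enorm (y - z) ^+ 2
                            <= h w + (2 * gamma)^-1 * enorm (w - z) ^+ 2].

(* With gamma1 = gamma/alpha, gamma2 = gamma/(1-alpha)
   and the conventions c/0 = oo, d/oo = 0, the coefficients 1/(2 gamma_i)
   are alpha/(2 gamma) and (1-alpha)/(2 gamma). The min over y is written
   as an infimum in \bar R. *)
Definition ryu_env (f1 f2 : V -> R) (f3 : V -> \bar R) (g1 g2 : V -> V)
    (alpha gamma : R) (z : V * V) : \bar R :=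
  let x1 := prox gamma f1 z.1 in
  let x2 := prox (gamma / alpha) f2 (alpha^-1 *: z.2 + x1) in
  ereal_inf [set (f3 y + (f1 x1 + inner (y - x1) (g1 x1)
                           + alpha / (2 * gamma) * enorm (y - x1) ^+ 2
                        + (f2 x2 + inner (y - x2) (g2 x2)
                           + (1 - alpha) / (2 * gamma) * enorm (y - x2) ^+ 2))%:E)%E
            | y in [set: V]].

Definition locally_lipschitz (F : V * V -> R) : Prop :=
  forall z, exists r, exists L, 0 < r /\
    forall u v, enorm2 (u - z) < r -> enorm2 (v - z) < r ->
      `|F u - F v| <= L * enorm2 (u - v).

End Defs.

(* Since alpha/(2 gamma) + (1 - alpha)/(2 gamma) = 1/(2 gamma), the function minimized in
   the envelope is f3(y) + |y|^2/(2 gamma) - <y, w(z)> + s(z), where w and s depend on z only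
   through the prox points x1, x2.  Prox maps of convex functions are nonexpansive, so w is
   globally and s locally Lipschitz in z.  As f1 + f2 + f3 attains its minimum, the descent
   lemma f_i(y) <= f_i(0) + <y, grad f_i(0)> + L_i/2 |y|^2 bounds f3 from below by a quadratic
   with leading coefficient -(L1 + L2)/2 > -1/(2 gamma).  The objective is therefore coercive
   in y, uniformly for z in a ball: the infimum is finite, near-minimizers stay bounded, and
   the difference of two infima is controlled by the Lipschitz moduli of w and s. *)

From HB Require Import structures.
From mathcomp Require Import all_boot all_order all_algebra.
From mathcomp Require Import all_classical all_reals all_analysis.
From mathcomp Require Import ring lra.
Import Order.TTheory GRing.Theory Num.Theory.
Import numFieldNormedType.Exports.
Set Implicit Arguments. Unset Strict Implicit. Unset Printing Implicit Defensive.
Local Open Scope ring_scope.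
Local Open Scope classical_set_scope.

Lemma ler_add_small_scale (R : realFieldType) (x y K : R) :
  (forall t, 0 < t -> t <= 1 -> x <= y + t * K) -> x <= y.
Proof.
move=> H; apply/ler_addgt0Pr => e e0.
pose t := Num.min 1 (e / (`|K| + 1)).
have t0 : 0 < t by rewrite lt_min ltr01 divr_gt0 // ltr_wpDl.
have tK : t * K <= e.
  apply: le_trans (ler_wpM2l (ltW t0) (ler_norm K)) _.
  have : t <= e / (`|K| + 1) by rewrite ge_min lexx orbT.
  rewrite ler_pdivlMr ?ltr_wpDl //; nra.
by apply: le_trans (H t t0 _) _; rewrite ?lerD2l // ge_min lexx.
Qed.

Lemma quadratic_ge_min (R : realFieldType) (c b t : R) :
  0 < c -> - (b ^+ 2 / (4 * c)) <= c * t ^+ 2 - b * t.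
Proof.
move=> c0; rewrite -subr_ge0.
have -> : c * t ^+ 2 - b * t - - (b ^+ 2 / (4 * c)) = (2 * c * t - b) ^+ 2 / (4 * c).
  by field; rewrite gt_eqF.
by rewrite divr_ge0 ?sqr_ge0 // mulr_ge0 // ltW.
Qed.

Lemma quadratic_le_bound (R : realFieldType) (c b t K : R) : 0 < c -> 0 <= b ->
  c * t ^+ 2 - b * t <= K -> t <= 1 + (`|K| + b) / c.
Proof.
move=> c0 b0 H; have Kn := ler_norm K.
have q0 : 0 <= (`|K| + b) / c by rewrite divr_ge0 ?addr_ge0 // ltW.
have [t1|t1] := leP t 1; first lra.
suff : t <= (`|K| + b) / c by lra.
rewrite ler_pdivlMr // -(ler_pM2r (lt_trans ltr01 t1)).
have : 0 <= `|K| * (t - 1) by rewrite mulr_ge0 // subr_ge0 ltW.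
move: H; rewrite expr2; nra.
Qed.

(** * Euclidean inner product *)

Section Inner.
Variables (R : realType) (d : nat).
Local Notation V := 'rV[R]_d.
Implicit Types u v w : V.

Lemma innerC u v : inner u v = inner v u.
Proof. by apply: eq_bigr => i _; rewrite mulrC. Qed.

Lemma innerDl u v w : inner (u + v) w = inner u w + inner v w.
Proof. by rewrite /inner -big_split; apply: eq_bigr => i _; rewrite !mxE mulrDl. Qed.

Lemma innerZl (a : R) u v : inner (a *: u) v = a * inner u v.
Proof. by rewrite /inner mulr_sumr; apply: eq_bigr => i _; rewrite !mxE mulrA. Qed.

Lemma innerNl u v : inner (- u) v = - inner u v.
Proof. by rewrite -scaleN1r innerZl mulN1r. Qed.

Lemma innerBl u v w : inner (u - v) w = inner u w - inner v w.
Proof. by rewrite innerDl innerNl. Qed.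

Lemma innerDr u v w : inner w (u + v) = inner w u + inner w v.
Proof. by rewrite innerC innerDl !(innerC w). Qed.

Lemma innerZr (a : R) u v : inner v (a *: u) = a * inner v u.
Proof. by rewrite innerC innerZl innerC. Qed.

Lemma innerNr u v : inner v (- u) = - inner v u.
Proof. by rewrite innerC innerNl innerC. Qed.

Lemma innerBr u v w : inner w (u - v) = inner w u - inner w v.
Proof. by rewrite innerDr innerNr. Qed.

Lemma inner0l v : inner 0 v = 0.
Proof. by rewrite -(scale0r 0) innerZl mul0r. Qed.

Lemma inner_ge0 u : 0 <= inner u u.
Proof. by apply: sumr_ge0 => i _; rewrite -expr2 sqr_ge0. Qed.

Lemma innerDD u v : inner (u + v) (u + v) = inner u u + 2 * inner u v + inner v v.
Proof. rewrite !innerDl !innerDr (innerC v u); ring. Qed.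

Lemma innerBB u v : inner (u - v) (u - v) = inner u u - 2 * inner u v + inner v v.
Proof. rewrite !innerBl !innerBr (innerC v u); ring. Qed.

Lemma inner_sqrB u v : inner u u - inner v v = inner (u - v) (u + v).
Proof. rewrite innerBl !innerDr (innerC v u); ring. Qed.

(* Lagrange's identity: the gap is half the sum of the squared 2x2 minors. *)
Lemma inner_sqr_le u v : inner u v ^+ 2 <= inner u u * inner v v.
Proof.
pose m i j := u 0 i * v 0 j - u 0 j * v 0 i.
have lagrange : inner u u * inner v v - inner u v ^+ 2 =
    2^-1 * \sum_(i < d) \sum_(j < d) m i j ^+ 2.
  have expand : \sum_(i < d) \sum_(j < d) m i j ^+ 2 =
      \sum_(i < d) \sum_(j < d) (u 0 i * u 0 i * (v 0 j * v 0 j))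
    + \sum_(i < d) \sum_(j < d) (u 0 j * u 0 j * (v 0 i * v 0 i))
    - 2 * \sum_(i < d) \sum_(j < d) (u 0 i * v 0 i * (u 0 j * v 0 j)).
    rewrite mulr_sumr -!big_split -sumrB; apply: eq_bigr => i _.
    rewrite mulr_sumr -!big_split -sumrB; apply: eq_bigr => j _ /=.
    rewrite /m; ring.
  have swap : \sum_(i < d) \sum_(j < d) (u 0 j * u 0 j * (v 0 i * v 0 i)) =
      \sum_(i < d) \sum_(j < d) (u 0 i * u 0 i * (v 0 j * v 0 j)).
    by rewrite exchange_big.
  rewrite expand swap /inner expr2 !mulr_suml.
  under eq_bigr do rewrite mulr_sumr.
  under [X in _ - X]eq_bigr do rewrite mulr_sumr.
  set A := \sum_(i < d) _; set B := \sum_(i < d) _.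
  have -> : B = \sum_(i < d) \sum_(j < d) (u 0 i * v 0 i * (u 0 j * v 0 j)) by [].
  by rewrite -/A; field.
rewrite -subr_ge0 lagrange mulr_ge0 ?invr_ge0 ?ler0n //.
by apply: sumr_ge0 => i _; apply: sumr_ge0 => j _; apply: sqr_ge0.
Qed.

Lemma enorm_ge0 u : 0 <= enorm u.
Proof. exact: sqrtr_ge0. Qed.

Lemma sqr_enorm u : enorm u ^+ 2 = inner u u.
Proof. by rewrite /enorm sqr_sqrtr // inner_ge0. Qed.

Lemma cauchy_schwarz u v : `|inner u v| <= enorm u * enorm v.
Proof.
rewrite /enorm -sqrtrM ?inner_ge0 // -sqrtr_sqr ler_sqrt ?mulr_ge0 ?inner_ge0 //.
exact: inner_sqr_le.
Qed.

Lemma inner_le u v : inner u v <= enorm u * enorm v.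
Proof. exact: le_trans (ler_norm _) (cauchy_schwarz u v). Qed.

Lemma enormD u v : enorm (u + v) <= enorm u + enorm v.
Proof.
rewrite {1}/enorm -(@ger0_norm _ (enorm u + enorm v)) ?addr_ge0 ?enorm_ge0 //.
rewrite -sqrtr_sqr ler_sqrt ?sqr_ge0 // innerDD sqrrD !sqr_enorm.
have := inner_le u v; lra.
Qed.

Lemma enormZ (a : R) u : enorm (a *: u) = `|a| * enorm u.
Proof. by rewrite /enorm innerZl innerZr mulrA -expr2 sqrtrM ?sqr_ge0 // sqrtr_sqr. Qed.

Lemma enormN u : enorm (- u) = enorm u.
Proof. by rewrite -scaleN1r enormZ normrN1 mul1r. Qed.

Lemma enormBC u v : enorm (u - v) = enorm (v - u).
Proof. by rewrite -enormN opprB. Qed.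

Lemma enorm0 : enorm (0 : V) = 0.
Proof. by rewrite /enorm inner0l sqrtr0. Qed.

Lemma enorm_le_dist u v : enorm u <= enorm v + enorm (u - v).
Proof. by have := enormD v (u - v); rewrite addrC subrK addrC. Qed.

Lemma mxnorm_le_enorm u : `|u| <= enorm u.
Proof.
rewrite /Num.norm /= mx_normrE; apply: bigmax_le; first exact: enorm_ge0.
move=> [i j] _ /=; rewrite (ord1 i) /enorm -sqrtr_sqr ler_sqrt ?inner_ge0 //.
rewrite /inner (bigD1 j) //= -expr2 lerDl.
by apply: sumr_ge0 => k _; rewrite -expr2 sqr_ge0.
Qed.

Lemma enorm2_ge0 (z : V * V) : 0 <= enorm2 z.
Proof. exact: sqrtr_ge0. Qed.

Lemma enorm2_fst (z : V * V) : enorm z.1 <= enorm2 z.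
Proof. by rewrite ler_sqrt ?lerDl ?inner_ge0 // addr_ge0 ?inner_ge0. Qed.

Lemma enorm2_snd (z : V * V) : enorm z.2 <= enorm2 z.
Proof. by rewrite ler_sqrt ?lerDr ?inner_ge0 // addr_ge0 ?inner_ge0. Qed.

Lemma enorm2_0 : enorm2 (0 : V * V) = 0.
Proof. by rewrite /enorm2 /= inner0l addr0 sqrtr0. Qed.

Lemma enorm2BC (x y : V * V) : enorm2 (x - y) = enorm2 (y - x).
Proof.
have enorm2N (z : V * V) : enorm2 (- z) = enorm2 z.
  by rewrite /enorm2 /= !innerNl !innerNr !opprK.
by rewrite -enorm2N opprB.
Qed.

End Inner.

(** * Convex functions with Lipschitz gradient and their prox maps *)

Section ConvexGradient.
Variables (R : realType) (d : nat).
Local Notation V := 'rV[R]_d.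
Implicit Types x y z : V.

Lemma continuous_inner_self : continuous (fun u : V => inner u u).
Proof.
have -> : (fun u : V => inner u u) = \sum_(i < d) (fun u : V => u 0 i * u 0 i).
  by rewrite fct_sumE; apply/funext => u.
move=> u; apply: differentiable_continuous; apply: differentiable_sum => i.
exact: (@differentiableM _ _ (fun u : V => u 0 i) (fun u : V => u 0 i) u
  (differentiable_coord _ _ _) (differentiable_coord _ _ _)).
Qed.

Lemma continuous_sqr_dist z : continuous (fun y : V => enorm (y - z) ^+ 2).
Proof.
have -> : (fun y : V => enorm (y - z) ^+ 2) = (fun u => inner u u) \o (fun y => y - z).
  by apply/funext => y; rewrite /= sqr_enorm.
move=> y; apply: continuous_comp; last exact: continuous_inner_self.
by apply: (@continuousB _ _ _ id (cst z)) => //; exact: cst_continuous.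
Qed.

Variables (f : V -> R) (g : V -> V).
Hypotheses (f_convex : convex_function setT f) (f_grad : is_gradient f g).

Lemma convex_fun_le (t : R) x y : 0 <= t -> t <= 1 ->
  f (t *: x + (1 - t) *: y) <= t * f x + (1 - t) * f y.
Proof. by move=> t0 t1; have := f_convex (Itv01 t0 t1) (in_setT x) (in_setT y). Qed.

Lemma continuous_grad_fun : continuous f.
Proof. by move=> x; apply: differentiable_continuous; case: (f_grad x). Qed.

Lemma gradient_ineq x y : f x + inner (y - x) (g x) <= f y.
Proof.
set v := y - x; have [dfx dfE] := f_grad x.
have Dv : 'D_v f x = inner v (g x) by rewrite deriveE // dfE.
have cv : (fun h : R => h^-1 *: ((f \o shift x) (h *: v) - f x)) @ 0^' --> inner v (g x).
  by rewrite -Dv; exact: (diff_derivable dfx).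
rewrite -lerBrDl leNgt; apply/negP => gap.
have e0 : 0 < inner v (g x) - (f y - f x) by rewrite subr_gt0.
move/cvgrPdist_lt: cv => /(_ _ e0).
rewrite near_withinE => /nbhs_ballP [del del0 Hdel].
pose h := Num.min (del / 2) (1 / 2).
have h0 : 0 < h by rewrite lt_min !divr_gt0.
have hdel : h < del.
  by rewrite gt_min; apply/orP; left; rewrite ltr_pdivrMr // ltr_pMr //; lra.
have h1 : h <= 1 by rewrite ge_min; apply/orP; right; lra.
have := Hdel h; rewrite /ball /= sub0r normrN ger0_norm ?ltW // => /(_ hdel (lt0r_neq0 h0)).
have -> : h^-1 *: ((f \o shift x) (h *: v) - f x) = h^-1 * (f (h *: y + (1 - h) *: x) - f x).
  rewrite /comp /shift /=; congr (_ * (f _ - _)).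
  by rewrite /v scalerBr scalerBl scale1r addrAC -addrA.
(* by convexity the difference quotient in direction v is at most f y - f x *)
have : h^-1 * (f (h *: y + (1 - h) *: x) - f x) <= f y - f x.
  by rewrite ler_pdivrMl //; have := convex_fun_le y x (ltW h0) h1; lra.
move=> quot close; have := ler_norm (inner v (g x) - h^-1 * (f (h *: y + (1 - h) *: x) - f x)).
lra.
Qed.

Lemma prox_sublevel_bounded (lam : R) z y : 0 < lam ->
  f y + (2 * lam)^-1 * enorm (y - z) ^+ 2 <= f z ->
  enorm (y - z) <= 2 * lam * enorm (g z).
Proof.
move=> lam0 hy; have gi := gradient_ineq z y.
have := cauchy_schwarz (y - z) (g z); rewrite ler_norml => /andP[cs _].
have e0 := enorm_ge0 (y - z); have G0 := enorm_ge0 (g z).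
have sq : enorm (y - z) ^+ 2 <= 2 * lam * enorm (g z) * enorm (y - z).
  have : (2 * lam)^-1 * enorm (y - z) ^+ 2 <= enorm (y - z) * enorm (g z) by lra.
  rewrite -(ler_pM2l (_ : 0 < 2 * lam)) ?mulr_gt0 // mulrA mulfV ?gt_eqF ?mulr_gt0 //.
  by rewrite mul1r; lra.
have K0 : 0 <= 2 * lam * enorm (g z) by rewrite !mulr_ge0 // ltW.
by rewrite leNgt; apply/negP => big; nra.
Qed.

Lemma prox_exists (lam : R) z : 0 < lam -> exists y, forall w,
  f y + (2 * lam)^-1 * enorm (y - z) ^+ 2 <= f w + (2 * lam)^-1 * enorm (w - z) ^+ 2.
Proof.
move=> lam0; set h := fun y => f y + (2 * lam)^-1 * enorm (y - z) ^+ 2.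
have hc : continuous h.
  move=> y; apply: (@continuousD _ _ _ f (fun y => (2 * lam)^-1 * enorm (y - z) ^+ 2)).
    exact: continuous_grad_fun.
  apply: (@continuousM _ _ (cst (2 * lam)^-1) (fun y => enorm (y - z) ^+ 2)).
    exact: cst_continuous.
  exact: continuous_sqr_dist.
have hz : h z = f z by rewrite /h subrr enorm0 expr0n /= mulr0 addr0.
set A := [set y | h y <= h z].
have Az : A z by rewrite /A /= lexx.
have Aclosed : closed A by exact: (continuous_closedP h).1 hc _ (@closed_le R (h z)).
have Abounded : bounded_set A.
  exists (enorm z + 2 * lam * enorm (g z)); split; first by rewrite num_real.
  move=> M HM y Ay; apply: ltW; apply: le_lt_trans HM.
  apply: le_trans (mxnorm_le_enorm y) _; apply: le_trans (enorm_le_dist y z) _.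
  by rewrite lerD2l prox_sublevel_bounded // -hz.
have [c /set_mem Ac cmin] := compact_EVT_min (ex_intro _ z Az)
  (bounded_closed_compact Abounded Aclosed) (continuous_subspaceT hc).
exists c => w; have [Aw|nAw] := pselect (A w); first exact: cmin (mem_set Aw).
by apply: le_trans Ac _; apply: ltW; rewrite ltNge; apply/negP.
Qed.

Lemma prox_min (lam : R) z w : 0 < lam ->
  f (prox lam f z) + (2 * lam)^-1 * enorm (prox lam f z - z) ^+ 2
  <= f w + (2 * lam)^-1 * enorm (w - z) ^+ 2.
Proof.
move=> lam0; have [y Hy] := prox_exists z lam0.
exact: (@xgetI _ 0 [set y | forall w, f y + (2 * lam)^-1 * enorm (y - z) ^+ 2
  <= f w + (2 * lam)^-1 * enorm (w - z) ^+ 2] y Hy w).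
Qed.

Lemma prox_variational_ineq (lam : R) z w : 0 < lam ->
  f (prox lam f z) - f w <= lam^-1 * inner (prox lam f z - z) (w - prox lam f z).
Proof.
move=> lam0; set p := prox lam f z.
apply: (@ler_add_small_scale _ _ _ ((2 * lam)^-1 * inner (w - p) (w - p))) => t t0 t1.
have := prox_min z (t *: w + (1 - t) *: p) lam0; rewrite -/p.
have -> : t *: w + (1 - t) *: p - z = (p - z) + t *: (w - p).
  by apply/rowP => i; rewrite !mxE; ring.
rewrite !sqr_enorm (innerDD (p - z)) innerZl !innerZr.
set P := inner (p - z) (p - z); set Q := inner (p - z) (w - p); set S := inner (w - p) (w - p).
have -> : (2 * lam)^-1 * (P + 2 * (t * Q) + t * (t * S)) =
    (2 * lam)^-1 * P + t * (lam^-1 * Q) + t * (t * ((2 * lam)^-1 * S)).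
  by field; rewrite gt_eqF.
move=> H; have conv := convex_fun_le w p (ltW t0) t1.
by rewrite -(ler_pM2l t0); lra.
Qed.

(* Firm nonexpansiveness: summing the two variational inequalities gives
   |p1 - p2|^2 <= <z1 - z2, p1 - p2>. *)
Lemma prox_nonexpansive (lam : R) : 0 < lam -> lipschitz_with (prox lam f) 1.
Proof.
move=> lam0 z1 z2; rewrite mul1r.
have H1 := prox_variational_ineq z1 (prox lam f z2) lam0.
have H2 := prox_variational_ineq z2 (prox lam f z1) lam0.
move: (prox lam f z1) (prox lam f z2) H1 H2 => p1 p2 H1 H2.
have : 0 <= lam^-1 * (inner (p1 - z1) (p2 - p1) + inner (p2 - z2) (p1 - p2)).
  by rewrite mulrDr; lra.
rewrite pmulr_rge0 ?invr_gt0 //.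
have -> : inner (p1 - z1) (p2 - p1) + inner (p2 - z2) (p1 - p2) =
    inner (z1 - z2) (p1 - p2) - enorm (p1 - p2) ^+ 2.
  rewrite sqr_enorm !innerBl !innerBr !(innerC z1) !(innerC z2) !(innerC p2 p1); ring.
rewrite subr_ge0 => firm; have cs := inner_le (z1 - z2) (p1 - p2).
have e0 := enorm_ge0 (p1 - p2); have e1 := enorm_ge0 (z1 - z2).
by rewrite leNgt; apply/negP => big; nra.
Qed.

Variable L : R.
Hypotheses (L_ge0 : 0 <= L) (g_lip : lipschitz_with g L).

(* Riemann-sum form of the descent lemma: chain the gradient inequality along the
   points x + (m/n)(y - x), m = 0..n, using the Lipschitz bound on g at each point. *)
Lemma descent_ineq_grid (n : nat) x y : (0 < n)%N ->
  f y <= f x + inner (y - x) (g x) + L * (n.+1%:R / (2 * n%:R)) * enorm (y - x) ^+ 2.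
Proof.
move=> n0; have N0 : 0 < n%:R :> R by rewrite ltr0n.
set N := n%:R in N0 *; set v := y - x; set G := inner v (g x); set S := inner v v.
pose p (m : R) := x + (m / N) *: v.
suff claim : forall m, (m <= n)%N ->
    f (p m%:R) <= f x + (m%:R / N) * G + L * (m%:R * (m%:R + 1) / (2 * N ^+ 2)) * S.
  have := claim n (leqnn n); rewrite /p divff ?gt_eqF // scale1r mul1r /v addrC subrK.
  by rewrite sqr_enorm -/S (_ : N * (N + 1) / (2 * N ^+ 2) = n.+1%:R / (2 * N)) //;
    rewrite -natr1 -/N; field; rewrite gt_eqF.
elim=> [|m IH] mn; first by rewrite /p !mul0r scale0r addr0 mulr0 mul0r !addr0.
have {}IH := IH (ltnW mn); rewrite -natr1; set A := m%:R in IH *.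
have A0 : 0 <= A := ler0n _ _.
have gi := gradient_ineq (p (A + 1)) (p A).
have back : p A - p (A + 1) = (- N^-1) *: v.
  by apply/rowP => i; rewrite !mxE; field; rewrite gt_eqF.
rewrite back innerZl in gi.
have glip : inner v (g (p (A + 1)) - g x) <= L * ((A + 1) / N) * S.
  apply: le_trans (inner_le _ _) _.
  have := g_lip (p (A + 1)) x; rewrite /p addrAC subrr add0r enormZ ger0_norm ?divr_ge0 //;
    last by rewrite addr_ge0.
  move/(ler_wpM2l (enorm_ge0 v)); move/le_trans; apply.
  by rewrite /S -sqr_enorm le_eqVlt; apply/orP; left; apply/eqP; ring.
move: gi; rewrite innerBr -/G in glip.
have -> : f x + (A + 1) / N * G + L * ((A + 1) * (A + 1 + 1) / (2 * N ^+ 2)) * S =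
    f x + A / N * G + L * (A * (A + 1) / (2 * N ^+ 2)) * S +
    N^-1 * (G + L * ((A + 1) / N) * S) by field; rewrite gt_eqF.
have : N^-1 * inner v (g (p (A + 1))) <= N^-1 * (G + L * ((A + 1) / N) * S).
  by apply: ler_wpM2l; [rewrite invr_ge0 ltW | lra].
rewrite mulNr; lra.
Qed.

Lemma descent_ineq x y :
  f y <= f x + inner (y - x) (g x) + L / 2 * enorm (y - x) ^+ 2.
Proof.
apply/ler_addgt0Pr => e e0; set S := enorm (y - x) ^+ 2.
have S0 : 0 <= S by rewrite /S sqr_enorm inner_ge0.
set q := L * S / (2 * e).
have q0 : 0 <= q.
  by apply: divr_ge0; [exact: mulr_ge0 | exact: mulr_ge0 (ler0n _ 2) (ltW e0)].
set n := (Num.trunc q).+1; have qn : q < n%:R by rewrite -truncn_lt_nat.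
have n0 : 0 < n%:R :> R by rewrite ltr0n.
have step := descent_ineq_grid x y (ltn0Sn (Num.trunc q)); rewrite -/n -/S in step.
have split : L * (n.+1%:R / (2 * n%:R)) * S = L / 2 * S + L * S / (2 * n%:R).
  by rewrite -natr1; field; rewrite gt_eqF.
have : L * S / (2 * n%:R) <= e.
  rewrite ler_pdivrMr ?mulr_gt0 //.
  by move: qn; rewrite /q ltr_pdivrMr ?mulr_gt0 // => /ltW; lra.
lra.
Qed.

End ConvexGradient.

(** * Lipschitz estimates on R^d x R^d *)

Section PairLipschitz.
Variables (R : realType) (d : nat).
Local Notation V := 'rV[R]_d.
Implicit Types (X Y : V * V -> V) (s : V * V -> R) (phi psi : V -> R).

Definition pair_lipschitz X :=
  exists K, forall u v, enorm (X u - X v) <= K * enorm2 (u - v).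

(* Radius 1 suffices: the constant may depend on the centre. *)
Definition unit_ball_lipschitz s := forall z0, exists K, forall u v,
  enorm2 (u - z0) < 1 -> enorm2 (v - z0) < 1 -> `|s u - s v| <= K * enorm2 (u - v).

Definition lipschitz_linear_growth phi := exists C, forall a b,
  `|phi a - phi b| <= C * (1 + enorm a + enorm b) * enorm (a - b).

Lemma pair_lipschitz_fst : pair_lipschitz fst.
Proof. by exists 1 => u v; rewrite mul1r; exact: (enorm2_fst (u - v)). Qed.

Lemma pair_lipschitz_snd : pair_lipschitz snd.
Proof. by exists 1 => u v; rewrite mul1r; exact: (enorm2_snd (u - v)). Qed.

Lemma pair_lipschitzD X Y : pair_lipschitz X -> pair_lipschitz Y ->
  pair_lipschitz (fun z => X z + Y z).
Proof.
move=> [K XK] [K' YK]; exists (K + K') => u v.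
rewrite opprD addrACA mulrDl; apply: le_trans (enormD _ _) _.
exact: lerD.
Qed.

Lemma pair_lipschitzN X : pair_lipschitz X -> pair_lipschitz (fun z => - X z).
Proof. by move=> [K XK]; exists K => u v; rewrite opprK addrC enormBC. Qed.

Lemma pair_lipschitzB X Y : pair_lipschitz X -> pair_lipschitz Y ->
  pair_lipschitz (fun z => X z - Y z).
Proof. by move=> hX hY; apply: pair_lipschitzD hX (pair_lipschitzN hY). Qed.

Lemma pair_lipschitzZ (a : R) X : pair_lipschitz X -> pair_lipschitz (fun z => a *: X z).
Proof.
move=> [K XK]; exists (`|a| * K) => u v.
by rewrite -scalerBr enormZ -mulrA ler_wpM2l.
Qed.

Lemma pair_lipschitz_comp (g : V -> V) (L : R) X :
  lipschitz_with g L -> pair_lipschitz X -> pair_lipschitz (fun z => g (X z)).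
Proof.
move=> g_lip [K XK]; exists (`|L| * K) => u v.
apply: le_trans (g_lip _ _) _; rewrite -mulrA.
apply: le_trans (ler_wpM2r (enorm_ge0 _) (ler_norm L)) _.
exact: ler_wpM2l.
Qed.

Lemma pair_lipschitz_ball_bounded X z0 : pair_lipschitz X ->
  exists B, forall u, enorm2 (u - z0) < 1 -> enorm (X u) <= B.
Proof.
move=> [K XK]; exists (enorm (X z0) + `|K|) => u hu.
apply: le_trans (enorm_le_dist _ (X z0)) _; rewrite lerD2l.
apply: le_trans (XK u z0) _; apply: le_trans (ler_wpM2r (enorm2_ge0 _) (ler_norm K)) _.
by rewrite -[leRHS]mulr1 ler_wpM2l // ltW.
Qed.

Lemma unit_ball_lipschitzD s1 s2 : unit_ball_lipschitz s1 -> unit_ball_lipschitz s2 ->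
  unit_ball_lipschitz (fun z => s1 z + s2 z).
Proof.
move=> h1 h2 z0; have [K1 H1] := h1 z0; have [K2 H2] := h2 z0.
exists (K1 + K2) => u v hu hv; have := H1 u v hu hv; have := H2 u v hu hv.
have := ler_normD (s1 u - s1 v) (s2 u - s2 v).
have -> : s1 u + s2 u - (s1 v + s2 v) = s1 u - s1 v + (s2 u - s2 v) by ring.
rewrite mulrDl; lra.
Qed.

Lemma unit_ball_lipschitz_bounded s z0 : unit_ball_lipschitz s ->
  exists B, forall u, enorm2 (u - z0) < 1 -> `|s u| <= B.
Proof.
move=> s_lip; have [K sK] := s_lip z0.
have z0z0 : enorm2 (z0 - z0) < 1 by rewrite subrr enorm2_0 ltr01.
exists (`|s z0| + `|K|) => u hu; have := sK u z0 hu z0z0.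
have := ler_wpM2r (enorm2_ge0 (u - z0)) (ler_norm K).
have : `|K| * enorm2 (u - z0) <= `|K| by rewrite -[leRHS]mulr1 ler_wpM2l // ltW.
have := ler_normD (s z0) (s u - s z0); rewrite addrC subrK; lra.
Qed.

Lemma linear_growth_comp phi X : lipschitz_linear_growth phi -> pair_lipschitz X ->
  unit_ball_lipschitz (fun z => phi (X z)).
Proof.
move=> [C phiC] hX z0; have [K XK] := hX.
have [B XB] := pair_lipschitz_ball_bounded z0 hX.
exists (`|C| * (1 + B + B) * `|K|) => u v hu hv.
apply: le_trans (phiC _ _) _.
have B0 : 0 <= B := le_trans (enorm_ge0 _) (XB _ hu).
have growth : C * (1 + enorm (X u) + enorm (X v)) <= `|C| * (1 + B + B).
  apply: le_trans (ler_wpM2r _ (ler_norm C)) _; first by rewrite !addr_ge0 ?enorm_ge0.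
  by rewrite ler_wpM2l // !lerD ?XB.
have dist : enorm (X u - X v) <= `|K| * enorm2 (u - v).
  by apply: le_trans (XK u v) _; rewrite ler_wpM2r ?enorm2_ge0 ?ler_norm.
apply: le_trans (ler_wpM2r (enorm_ge0 _) growth) _; rewrite -[leRHS]mulrA.
by apply: ler_wpM2l dist; rewrite mulr_ge0 // !addr_ge0.
Qed.

Lemma linear_growthD phi psi : lipschitz_linear_growth phi -> lipschitz_linear_growth psi ->
  lipschitz_linear_growth (fun p => phi p + psi p).
Proof.
move=> [C phiC] [C' psiC]; exists (C + C') => a b.
have -> : phi a + psi a - (phi b + psi b) = (phi a - phi b) + (psi a - psi b) by ring.
by apply: le_trans (ler_normD _ _) _; rewrite !mulrDl lerD.
Qed.

Lemma linear_growthB phi psi : lipschitz_linear_growth phi -> lipschitz_linear_growth psi ->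
  lipschitz_linear_growth (fun p => phi p - psi p).
Proof.
move=> [C phiC] [C' psiC]; exists (C + C') => a b.
have -> : phi a - psi a - (phi b - psi b) = (phi a - phi b) - (psi a - psi b) by ring.
by apply: le_trans (ler_normB _ _) _; rewrite !mulrDl lerD.
Qed.

Lemma linear_growth_scaled_sqr (kap : R) : lipschitz_linear_growth (fun p => kap * inner p p).
Proof.
exists `|kap| => a b; rewrite -mulrBr normrM -mulrA ler_wpM2l // inner_sqrB.
apply: le_trans (cauchy_schwarz _ _) _; rewrite mulrC ler_wpM2r ?enorm_ge0 //.
by apply: le_trans (enormD _ _) _; rewrite -addrA lerDr.
Qed.

Section GradientGrowth.
Variables (g : V -> V) (L : R).
Hypotheses (L_ge0 : 0 <= L) (g_lip : lipschitz_with g L).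

Lemma gradient_norm_le c : enorm (g c) <= enorm (g 0) + L * enorm c.
Proof. by apply: le_trans (enorm_le_dist _ (g 0)) _; rewrite lerD2l -{2}(subr0 c). Qed.

Lemma linear_growth_inner_gradient : lipschitz_linear_growth (fun p => inner p (g p)).
Proof.
exists (enorm (g 0) + L) => a b.
have -> : inner a (g a) - inner b (g b) = inner (a - b) (g a) + inner b (g a - g b).
  by rewrite innerBl innerBr; ring.
apply: le_trans (ler_normD _ _) _.
apply: le_trans (lerD (cauchy_schwarz _ _) (cauchy_schwarz _ _)) _.
have e0 := enorm_ge0 (a - b); have na := enorm_ge0 a; have nb := enorm_ge0 b.
have G0 := enorm_ge0 (g 0).
apply: le_trans (_ : _ <= enorm (a - b) * (enorm (g 0) + L * enorm a)
                          + enorm b * (L * enorm (a - b))) _.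
  by rewrite lerD // ler_wpM2l ?gradient_norm_le.
have := mulr_ge0 e0 (mulr_ge0 G0 (addr_ge0 na nb)); have := mulr_ge0 e0 L_ge0.
lra.
Qed.

Lemma convex_linear_growth (f : V -> R) :
  convex_function setT f -> is_gradient f g -> lipschitz_linear_growth f.
Proof.
move=> f_convex f_grad; exists (enorm (g 0) + L) => a b.
have hab := gradient_ineq f_convex f_grad a b; have hba := gradient_ineq f_convex f_grad b a.
rewrite -opprB innerNl in hab.
move: (cauchy_schwarz (a - b) (g a)); rewrite ler_norml => /andP[_ ca].
move: (cauchy_schwarz (a - b) (g b)); rewrite ler_norml => /andP[cb _].
have growth (c c' : V) : enorm (g c) <= (enorm (g 0) + L) * (1 + enorm c + enorm c').
  have nc := enorm_ge0 c; have nc' := enorm_ge0 c'.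
  apply: le_trans (gradient_norm_le c) _; rewrite mulrDl lerD //.
    by rewrite ler_peMr ?enorm_ge0 // -addrA lerDl addr_ge0.
  by rewrite ler_wpM2l //; lra.
have ga := growth a b; have gb := growth b a.
have e0 := enorm_ge0 (a - b).
have := ler_wpM2l e0 ga; have := ler_wpM2l e0 gb.
by rewrite ler_norml; lra.
Qed.

End GradientGrowth.

End PairLipschitz.

Arguments pair_lipschitz_fst {R d}.
Arguments pair_lipschitz_snd {R d}.
Arguments linear_growth_scaled_sqr {R d}.

(** * Infima of quadratically perturbed proper functions *)

Section QuadraticEnvelope.
Variables (R : realType) (d : nat).
Local Notation V := 'rV[R]_d.
Variables (f3 : V -> \bar R) (gam : R) (w : V * V -> V) (s : V * V -> R).

Definition env_obj (y : V) (z : V * V) : R :=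
  (2 * gam)^-1 * inner y y - inner y (w z) + s z.

Definition quad_env (z : V * V) : \bar R :=
  ereal_inf [set (f3 y + (env_obj y z)%:E)%E | y in [set: V]].

Variables (a M : R) (b : V).
Hypotheses (f3_proper : proper_fun f3) (M_lt : M < (2 * gam)^-1)
  (f3_ge : forall y, ((- a - inner y b - M * inner y y)%:E <= f3 y)%E).

Let c := (2 * gam)^-1 - M.
Let c_gt0 : 0 < c. Proof. by rewrite subr_gt0. Qed.

Lemma env_obj_ge y z (ry : R) : f3 y = ry%:E ->
  c * enorm y ^+ 2 - (enorm b + enorm (w z)) * enorm y - a + s z <= ry + env_obj y z.
Proof.
move=> Ey; have := f3_ge y; rewrite Ey lee_fin => Hl.
have cb := inner_le y b; have cw := inner_le y (w z).
by rewrite /env_obj /c sqr_enorm; have := enorm_ge0 y; lra.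
Qed.

Lemma quad_env_ge z :
  ((- a + s z - (enorm b + enorm (w z)) ^+ 2 / (4 * c))%:E <= quad_env z)%E.
Proof.
have [f3N _] := f3_proper.
apply/ereal_infP => _ [y _ <-]; case Ey: (f3 y) => [ry| |].
- rewrite -EFinD lee_fin; have := env_obj_ge z Ey.
  by have := quadratic_ge_min (enorm b + enorm (w z)) (enorm y) c_gt0; lra.
- by rewrite leey.
- by have := f3N y; rewrite Ey.
Qed.

Lemma quad_env_le y z : (quad_env z <= f3 y + (env_obj y z)%:E)%E.
Proof. by apply: ereal_inf_lbound; exists y. Qed.

Lemma quad_env_fin_num z : quad_env z \is a fin_num.
Proof.
have [_ [y0 /EFin_fin_numP [r0 E0]]] := f3_proper.
rewrite fin_numElt; apply/andP; split; first exact: lt_le_trans (ltNyr _) (quad_env_ge z).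
by apply: le_lt_trans (quad_env_le y0 z) _; rewrite E0 -EFinD ltry.
Qed.

Hypotheses (w_lip : pair_lipschitz w) (s_lip : unit_ball_lipschitz s).

Lemma near_minimizer_bounded z0 : exists Rb, forall z y (ry : R),
  enorm2 (z - z0) < 1 -> f3 y = ry%:E -> ry + env_obj y z <= fine (quad_env z) + 1 ->
  enorm y <= Rb.
Proof.
have [_ [y0 /EFin_fin_numP [r0 E0]]] := f3_proper.
have [W Wb] := pair_lipschitz_ball_bounded z0 w_lip.
have [Sb Sbd] := unit_ball_lipschitz_bounded z0 s_lip.
set K := r0 + (2 * gam)^-1 * inner y0 y0 + enorm y0 * W + Sb + 1 + a + Sb.
exists (1 + (`|K| + (enorm b + W)) / c) => z y ry hz Ey near_min.
have W0 : 0 <= W := le_trans (enorm_ge0 _) (Wb _ hz).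
apply: quadratic_le_bound c_gt0 (addr_ge0 (enorm_ge0 b) W0) _.
have lb := env_obj_ge z Ey.
have ub : fine (quad_env z) <= r0 + env_obj y0 z.
  by have := quad_env_le y0 z; rewrite -(fineK (quad_env_fin_num z)) E0 -EFinD lee_fin.
have obj_y0 : env_obj y0 z <= (2 * gam)^-1 * inner y0 y0 + enorm y0 * W + Sb.
  move: (cauchy_schwarz y0 (w z)); rewrite ler_norml => /andP[cs _].
  have := ler_wpM2l (enorm_ge0 y0) (Wb z hz); have := ler_norm (s z).
  by have := Sbd z hz; rewrite /env_obj; lra.
have : (enorm b + enorm (w z)) * enorm y <= (enorm b + W) * enorm y.
  by rewrite ler_wpM2r ?enorm_ge0 // lerD2l Wb.
have := Sbd z hz; have := ler_norm (- s z); rewrite normrN /K; lra.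
Qed.

Lemma quad_env_locally_lipschitz : locally_lipschitz (fun z => fine (quad_env z)).
Proof.
move=> z0; have [Rb near_bd] := near_minimizer_bounded z0.
have [Kw wK] := w_lip; have [Ks sK] := s_lip z0.
exists 1, (Rb * `|Kw| + `|Ks|); split; first exact: ltr01.
suff one_sided : forall u v, enorm2 (u - z0) < 1 -> enorm2 (v - z0) < 1 ->
    fine (quad_env u) - fine (quad_env v) <= (Rb * `|Kw| + `|Ks|) * enorm2 (u - v).
  move=> u v hu hv; rewrite ler_norml one_sided // andbT.
  by have := one_sided v u hv hu; rewrite enorm2BC; lra.
move=> u v hu hv; have [f3N _] := f3_proper.
have fu := quad_env_fin_num u; have fv := quad_env_fin_num v.
apply: (@ler_add_small_scale _ _ _ 1) => t t0 t1.
have [_ [y _ <-] Hy] := lb_ereal_inf_adherent t0 fv.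
have {}Hy : (f3 y + (env_obj y v)%:E < quad_env v + t%:E)%E := Hy.
rewrite -(fineK fv) in Hy.
case Ey: (f3 y) Hy => [ry| |] Hy; last 2 first.
- by move: Hy; rewrite -EFinD /= ltNge leey.
- by have := f3N y; rewrite Ey.
rewrite -!EFinD lte_fin in Hy.
have y_le : enorm y <= Rb by apply: near_bd hv Ey _; lra.
have Eu : fine (quad_env u) <= ry + env_obj y u.
  by have := quad_env_le y u; rewrite -(fineK fu) Ey -EFinD lee_fin.
have obj_diff : env_obj y u - env_obj y v <= (Rb * `|Kw| + `|Ks|) * enorm2 (u - v).
  have -> : env_obj y u - env_obj y v = inner y (w v - w u) + (s u - s v).
    by rewrite /env_obj innerBr; ring.
  have e0 := enorm2_ge0 (u - v); rewrite mulrDl -mulrA.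
  apply: lerD; last first.
    apply: le_trans (ler_norm _) _; apply: le_trans (sK u v hu hv) _.
    by rewrite ler_wpM2r ?ler_norm.
  apply: le_trans (inner_le _ _) _; apply: ler_pM; rewrite ?enorm_ge0 //.
  by apply: le_trans (wK v u) _; rewrite enorm2BC ler_wpM2r ?ler_norm.
lra.
Qed.

End QuadraticEnvelope.

(** * The relaxed Ryu envelope *)

Section RyuEnvelope.
Variables (R : realType) (d : nat).
Local Notation V := 'rV[R]_d.
Variables (f1 f2 : V -> R) (g1 g2 : V -> V) (L1 L2 alpha gamma : R).
Hypotheses (f1_convex : convex_function setT f1) (f2_convex : convex_function setT f2)
  (f1_grad : is_gradient f1 g1) (f2_grad : is_gradient f2 g2)
  (L1_ge0 : 0 <= L1) (L2_ge0 : 0 <= L2)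
  (g1_lip : lipschitz_with g1 L1) (g2_lip : lipschitz_with g2 L2)
  (alpha_gt0 : 0 < alpha) (gamma_gt0 : 0 < gamma).

Definition ryu_x1 (z : V * V) := prox gamma f1 z.1.
Definition ryu_x2 (z : V * V) := prox (gamma / alpha) f2 (alpha^-1 *: z.2 + ryu_x1 z).

Definition ryu_w (z : V * V) : V :=
  gamma^-1 *: (alpha *: ryu_x1 z + (1 - alpha) *: ryu_x2 z) - g1 (ryu_x1 z) - g2 (ryu_x2 z).

Definition ryu_s (z : V * V) : R :=
  (f1 (ryu_x1 z) - inner (ryu_x1 z) (g1 (ryu_x1 z))
     + alpha / (2 * gamma) * inner (ryu_x1 z) (ryu_x1 z))
  + (f2 (ryu_x2 z) - inner (ryu_x2 z) (g2 (ryu_x2 z))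
     + (1 - alpha) / (2 * gamma) * inner (ryu_x2 z) (ryu_x2 z)).

(* The weights alpha/(2 gamma) and (1 - alpha)/(2 gamma) add up to 1/(2 gamma). *)
Lemma ryu_envE (f3 : V -> \bar R) :
  ryu_env f1 f2 f3 g1 g2 alpha gamma = quad_env f3 gamma ryu_w ryu_s.
Proof.
apply/funext => z; rewrite /ryu_env /quad_env; congr ereal_inf.
apply: eq_imagel => y _; congr (f3 y + _%:E).
rewrite /env_obj /ryu_w /ryu_s /ryu_x2 /ryu_x1 /=.
move: (prox gamma f1 z.1) => p1; move: (prox _ f2 _) => p2.
rewrite !sqr_enorm !innerBB !innerBl !innerBr innerZr innerDr !innerZr.
by field; rewrite gt_eqF.
Qed.

Lemma ryu_x1_lipschitz : pair_lipschitz ryu_x1.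
Proof.
rewrite /ryu_x1.
exact: pair_lipschitz_comp (prox_nonexpansive f1_convex f1_grad gamma_gt0) pair_lipschitz_fst.
Qed.

Lemma ryu_x2_lipschitz : pair_lipschitz ryu_x2.
Proof.
rewrite /ryu_x2.
apply: pair_lipschitz_comp (prox_nonexpansive f2_convex f2_grad (divr_gt0 gamma_gt0 alpha_gt0)) _.
exact: pair_lipschitzD (pair_lipschitzZ _ pair_lipschitz_snd) ryu_x1_lipschitz.
Qed.

Lemma ryu_w_lipschitz : pair_lipschitz ryu_w.
Proof.
have x1L := ryu_x1_lipschitz; have x2L := ryu_x2_lipschitz.
apply: pair_lipschitzB; last exact: pair_lipschitz_comp g2_lip x2L.
apply: pair_lipschitzB; last exact: pair_lipschitz_comp g1_lip x1L.
by apply: pair_lipschitzZ; apply: pair_lipschitzD; apply: pair_lipschitzZ.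
Qed.

Let linear_growth_gradient_model (f : V -> R) (g : V -> V) (L kap : R) :
  convex_function setT f -> is_gradient f g -> 0 <= L -> lipschitz_with g L ->
  lipschitz_linear_growth (fun p => f p - inner p (g p) + kap * inner p p).
Proof.
move=> f_convex f_grad L_ge0 g_lip.
exact (linear_growthD (linear_growthB (convex_linear_growth L_ge0 g_lip f_convex f_grad)
  (linear_growth_inner_gradient L_ge0 g_lip)) (linear_growth_scaled_sqr kap)).
Qed.

Lemma ryu_s_lipschitz : unit_ball_lipschitz ryu_s.
Proof.
apply: unit_ball_lipschitzD.
  exact: linear_growth_comp (linear_growth_gradient_model _ f1_convex f1_grad L1_ge0 g1_lip)
    ryu_x1_lipschitz.
exact: linear_growth_comp (linear_growth_gradient_model _ f2_convex f2_grad L2_ge0 g2_lip)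
  ryu_x2_lipschitz.
Qed.

End RyuEnvelope.

Lemma minimizer_quadratic_minorant (R : realType) (d : nat) (f1 f2 : 'rV[R]_d -> R)
    (f3 : 'rV[R]_d -> \bar R) (g1 g2 : 'rV[R]_d -> 'rV[R]_d) (L1 L2 : R) :
  convex_function setT f1 -> convex_function setT f2 ->
  is_gradient f1 g1 -> is_gradient f2 g2 -> 0 <= L1 -> 0 <= L2 ->
  lipschitz_with g1 L1 -> lipschitz_with g2 L2 -> proper_fun f3 ->
  (exists xs, forall y, ((f1 xs + f2 xs)%:E + f3 xs <= (f1 y + f2 y)%:E + f3 y)%E) ->
  exists a b, forall y, ((- a - inner y b - (L1 + L2) / 2 * inner y y)%:E <= f3 y)%E.
Proof.
move=> f1_convex f2_convex f1_grad f2_grad L1_ge0 L2_ge0 g1_lip g2_lip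
  [f3N [y0 fin_y0]] [xs xs_min].
have [rxs Exs] : exists rxs, f3 xs = rxs%:E.
  case Exs: (f3 xs) => [r| |]; [by exists r| |by have := f3N xs; rewrite Exs].
  have /EFin_fin_numP [r0 E0] := fin_y0.
  by have := xs_min y0; rewrite Exs E0 -EFinD addey // leNgt ltry.
exists (f1 0 + f2 0 - (f1 xs + f2 xs + rxs)), (g1 0 + g2 0) => y.
case Ey: (f3 y) => [ry| |]; [|by rewrite leey|by have := f3N y; rewrite Ey].
rewrite lee_fin; have := xs_min y; rewrite Exs Ey -!EFinD lee_fin.
have := descent_ineq f1_convex f1_grad L1_ge0 g1_lip 0 y.
have := descent_ineq f2_convex f2_grad L2_ge0 g2_lip 0 y.
by rewrite !subr0 !sqr_enorm innerDr; lra.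
Qed.

Unset Implicit Arguments.

Theorem proposition2 (R : realType) (d : nat)
    (f1 f2 : 'rV[R]_d -> R) (f3 : 'rV[R]_d -> \bar R)
    (g1 g2 : 'rV[R]_d -> 'rV[R]_d) (L1 L2 alpha gamma : R) :
  convex_function setT f1 -> convex_function setT f2 ->
  is_gradient f1 g1 -> is_gradient f2 g2 ->
  0 < L1 -> 0 < L2 -> lipschitz_with g1 L1 -> lipschitz_with g2 L2 ->
  proper_fun f3 -> lower_semicontinuous f3 ->
  (exists xs : 'rV[R]_d, forall y : 'rV[R]_d,
      ((f1 xs + f2 xs)%:E + f3 xs <= (f1 y + f2 y)%:E + f3 y)%E) ->
  0 < alpha -> 0 < gamma -> gamma < (L1 + L2)^-1 ->
  (forall z, ryu_env f1 f2 f3 g1 g2 alpha gamma z \is a fin_num) /\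
  locally_lipschitz (fun z => fine (ryu_env f1 f2 f3 g1 g2 alpha gamma z)).
Proof.
move=> f1_convex f2_convex f1_grad f2_grad L1_gt0 L2_gt0 g1_lip g2_lip
  f3_proper _ has_min alpha_gt0 gamma_gt0 gamma_lt.
have [L1_ge0 L2_ge0] := (ltW L1_gt0, ltW L2_gt0).
have [a [b f3_ge]] := minimizer_quadratic_minorant f1_convex f2_convex f1_grad f2_grad
  L1_ge0 L2_ge0 g1_lip g2_lip f3_proper has_min.
have M_lt : (L1 + L2) / 2 < (2 * gamma)^-1.
  have L_gt0 : 0 < L1 + L2 by rewrite addr_gt0.
  have gap : 0 < 1 - gamma * (L1 + L2) by rewrite subr_gt0 -ltr_pdivlMr // div1r.
  rewrite -subr_gt0 (_ : _ - _ = (1 - gamma * (L1 + L2)) / (2 * gamma)).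
    by rewrite divr_gt0 // mulr_gt0.
  by field; rewrite gt_eqF.
rewrite ryu_envE //; split; first exact: quad_env_fin_num f3_proper M_lt f3_ge.
exact: quad_env_locally_lipschitz f3_proper M_lt f3_ge
  (ryu_w_lipschitz f1_convex f2_convex f1_grad f2_grad g1_lip g2_lip alpha_gt0 gamma_gt0)
  (ryu_s_lipschitz f1_convex f2_convex f1_grad f2_grad L1_ge0 L2_ge0 g1_lip g2_lip
    alpha_gt0 gamma_gt0).
Qed.
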